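(* Let $n\ge2$, $\omega\in\mathbb{R}^n$, $k\in\mathbb{R}_{>0}^n$ satisfy (IC1) $\sum_\mu\omega_\mu=0$, (IC2) $\omega\ne0$, (IC3) $\left|\frac{\omega_1}{k_1}\right|\le\cdots\le\left|\frac{\omega_n}{k_n}\right|$. For $\sigma\in\{-1,+1\}^n$ let $f_\sigma(R)=-R+\frac1n\sum_{\mu=1}^n\sigma_\mu\sqrt{k_\mu^2R-\omega_\mu^2}$. Let $\sigma\in\{-1,+1\}^n$ and $\mu$ be an index with $\sigma_\mu=+1$, and let $\sigma'$ be given by $\sigma'_\mu=-1$ and $\sigma'_\nu=\sigma_\nu$ for $\nu\ne\mu$. If $f_\sigma$ has no positive roots, then $f_{\sigma'}$ has no positive roots.
   Context: Square roots are nonnegative real square roots; a positive root of $f_\sigma$ is a real $R>0$ with $k_\mu^2R-\omega_\mu^2\ge0$ for all $\mu$ and $f_\sigma(R)=0$. *)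

From HB Require Import structures.
From mathcomp Require Import all_boot all_order all_algebra.
Set Implicit Arguments. Unset Strict Implicit. Unset Printing Implicit Defensive.
Import Order.TTheory GRing.Theory Num.Theory.
Local Open Scope ring_scope.

(* A sign vector sigma in {-1,+1}^n is encoded as sigma : 'I_n -> bool,
   with true meaning +1 and false meaning -1. *)
Definition sgn (R : numDomainType) (b : bool) : R := if b then 1 else -1.

Definition fsig (F : rcfType) (n : nat) (omega k : 'I_n -> F)
    (sigma : 'I_n -> bool) (R : F) : F :=
  - R + n%:R^-1 * \sum_(mu < n) sgn F (sigma mu) * Num.sqrt (k mu ^+ 2 * R - omega mu ^+ 2).

Definition pos_root (F : rcfType) (n : nat) (omega k : 'I_n -> F)
    (sigma : 'I_n -> bool) (R : F) : Prop :=
  0 < R /\ (forall mu, 0 <= k mu ^+ 2 * R - omega mu ^+ 2) /\ fsig omega k sigma R = 0.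

Definition flip_to_minus (n : nat) (sigma : 'I_n -> bool) (mu : 'I_n) : 'I_n -> bool :=
  fun nu => if nu == mu then false else sigma nu.

(* If R1 > 0 is a root of f_sigma', then
   f_sigma(R1) = f_sigma'(R1) + (2/n) sqrt(k_mu^2 R1 - omega_mu^2) >= 0, while
   f_sigma(R) <= -R + kmean sqrt R < 0 for R > kmean^2, kmean being the mean of the
   k_nu; as the radicands only grow with R, f_sigma vanishes in between.
   Over a real closed field the intermediate value theorem has to be earned:
   f_sigma is a polynomial in R and finitely many square roots of polynomials,
   and the sign of G + H sqrt q is determined by the signs of G, H and
   G^2 - H^2 q, so eliminating one root at a time shows that the sign of
   f_sigma is constant off finitely many points.  Together with the estimate
   |f(x) - f(p)| <= |x - p| + kmean sqrt |x - p| this yields a root, by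
   induction on the exceptional points. *)

From HB Require Import structures.
From mathcomp Require Import all_boot all_order all_algebra.
From mathcomp Require Import polyrcf.
From mathcomp Require Import ring lra.
Import Order.TTheory GRing.Theory Num.Theory.
Local Open Scope ring_scope.
Set Implicit Arguments.
Unset Strict Implicit.
Unset Printing Implicit Defensive.

Section SignOfRadical.
Variable F : rcfType.

Definition sgz_add_rule (sa sb sN : int) : int :=
  if sN == 1 then sa else if sN == -1 then sb else if sa == sb then sa else 0.

Lemma sgzD (a b : F) :
  sgz (a + b) = sgz_add_rule (sgz a) (sgz b) (sgz (a ^+ 2 - b ^+ 2)).
Proof.
rewrite /sgz_add_rule.
have [N_lt0|N_gt0|N_eq0] := ltrgtP (a ^+ 2 - b ^+ 2) 0.
all: have [a_lt0|a_gt0|a0] := ltrgtP a 0; have [b_lt0|b_gt0|b0] := ltrgtP b 0.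
all: try rewrite a0 ?add0r ?sgz0; try rewrite b0 ?addr0 ?sgz0.
all: try rewrite (ltr0_sgz a_lt0); try rewrite (gtr0_sgz a_gt0);
  try rewrite (ltr0_sgz b_lt0); try rewrite (gtr0_sgz b_gt0);
  try rewrite (ltr0_sgz N_lt0); try rewrite (gtr0_sgz N_gt0);
  try rewrite N_eq0 sgz0 => //=.
all: first [ by rewrite !if_same | by rewrite ltr0_sgz //; nra | by rewrite gtr0_sgz //; nra
           | by apply/eqP; rewrite sgz_eq0; apply/eqP; nra | by exfalso; nra ].
Qed.

Lemma sgz_add_mul_sqrt (G H q : F) : 0 <= q ->
  sgz (G + H * Num.sqrt q) =
  sgz_add_rule (sgz G) (sgz H) (sgz (G ^+ 2 - H ^+ 2 * q)).
Proof.
move=> q_ge0; have := sqr_sqrtr q_ge0; set s := Num.sqrt q => <-.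
rewrite -exprMn sgzD.
have [s_gt0|s_eq0] := boolP (0 < s).
  by rewrite sgzM (gtr0_sgz s_gt0) mulr1.
have -> : s = 0 by apply/eqP; rewrite eq_le sqrtr_ge0 andbT leNgt.
rewrite mulr0 expr0n /= subr0 sgz0 sgzX /sgz_add_rule.
by have [G_lt0|G_gt0|->] := ltrgtP G 0;
  rewrite ?(ltr0_sgz G_lt0) ?(gtr0_sgz G_gt0) ?sgz0 /= ?if_same.
Qed.
End SignOfRadical.

Section IntermediateValue.
Variable F : realFieldType.

Lemma sgz_near (a b : F) : `|a - b| < `|b| -> sgz a = sgz b.
Proof.
have := ler_norm (a - b); have := ler_norm (b - a); rewrite distrC.
have [b_lt0|b_gt0|->] := ltrgtP b 0.
- by rewrite (ltr0_norm b_lt0) (ltr0_sgz b_lt0) => *; rewrite ltr0_sgz //; lra.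
- by rewrite (gtr0_norm b_gt0) (gtr0_sgz b_gt0) => *; rewrite gtr0_sgz //; lra.
- by rewrite normr0 => _ _; rewrite ltNge normr_ge0.
Qed.

Variable g : F -> F.

Definition sgz_const_off (S : seq F) (z w : F) :=
  forall a b, z <= a -> a <= b -> b <= w ->
  ~~ has (fun y => a <= y <= b) S -> sgz (g a) = sgz (g b).

Definition sgz_locally_const (z w : F) :=
  forall p, z <= p <= w -> g p != 0 -> exists2 d, 0 < d &
  forall x, z <= x <= w -> `|x - p| < d -> sgz (g x) = sgz (g p).

Lemma sgz_const_off_sub p S z w z' w' : z <= z' -> w' <= w -> ~~ (z' <= p <= w') ->
  sgz_const_off (p :: S) z w -> sgz_const_off S z' w'.
Proof.
move=> zz' w'w p_out sg_const a b z'a ab bw' S_ab.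
apply: sg_const (le_trans zz' z'a) ab (le_trans bw' w'w) _.
rewrite /= negb_or S_ab andbT; apply: contra p_out => /andP[ap pb].
by rewrite (le_trans z'a ap) (le_trans pb bw').
Qed.

Lemma sgz_locally_const_sub z w z' w' : z <= z' -> w' <= w ->
  sgz_locally_const z w -> sgz_locally_const z' w'.
Proof.
move=> zz' w'w sg_loc p /andP[z'p pw'] gp.
have [|d d_gt0 d_loc] := sg_loc p _ gp; first by rewrite (le_trans zz') ?(le_trans pw').
exists d => // x /andP[z'x xw']; apply: d_loc.
by rewrite (le_trans zz') ?(le_trans xw').
Qed.

Lemma ivt_sgz_const_off S z w : sgz_const_off S z w -> sgz_locally_const z w ->
  z <= w -> 0 < g z -> g w < 0 -> exists2 x, z <= x <= w & g x = 0.
Proof.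
elim: S z w => [|p S IH] z w sg_const sg_loc zw gz_gt0 gw_lt0.
  by move: (sg_const z w (lexx z) zw (lexx w) isT); rewrite gtr0_sgz // ltr0_sgz.
have [/andP[zp pw]|p_out] := boolP (z <= p <= w); last first.
  exact: IH (sgz_const_off_sub (lexx z) (lexx w) p_out sg_const) sg_loc zw gz_gt0 gw_lt0.
have [gp0|gp_neq0] := eqVneq (g p) 0; first by exists p; rewrite ?zp.
have [|d d_gt0 d_loc] := sg_loc p _ gp_neq0; first by rewrite zp pw.
have near_p x : z <= x <= w -> `|x - p| <= d / 2 -> sgz (g x) = sgz (g p).
  by move=> xzw xp; apply: d_loc => //; lra.
have far_p x : z <= x <= w -> sgz (g x) != sgz (g p) -> d / 2 < `|x - p|.
  by move=> xzw; apply: contraTT; rewrite -leNgt negbK => xp; apply/eqP/near_p.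
have [gp_lt0|gp_gt0] : g p < 0 \/ 0 < g p.
  by move: gp_neq0; rewrite neq_lt => /orP[]; [left|right].
- have zx : z < p - d / 2.
    have := far_p z; rewrite lexx zw gtr0_sgz // ltr0_sgz // => /(_ isT isT).
    by rewrite distrC ger0_norm ?subr_ge0 //; lra.
  have gx_lt0 : g (p - d / 2) < 0.
    rewrite -sgz_lt0 near_p ?sgz_lt0 //; first by apply/andP; split; lra.
    by rewrite addrAC subrr add0r normrN ger0_norm //; lra.
  have [||r /andP[zr rx] gr] := IH z (p - d / 2) _ _ (ltW zx) gz_gt0 gx_lt0.
  + by apply: sgz_const_off_sub sg_const; rewrite ?negb_and -?ltNge; lra.
  + by apply: sgz_locally_const_sub sg_loc; lra.
  by exists r => //; apply/andP; split; lra.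
- have xw : p + d / 2 < w.
    have := far_p w; rewrite lexx zw andbT ltr0_sgz // gtr0_sgz // => /(_ isT isT).
    by rewrite ger0_norm ?subr_ge0 //; lra.
  have gx_gt0 : 0 < g (p + d / 2).
    rewrite -sgz_gt0 near_p ?sgz_gt0 //; first by apply/andP; split; lra.
    by rewrite addrAC subrr add0r ger0_norm //; lra.
  have [||r /andP[xr rw] gr] := IH (p + d / 2) w _ _ (ltW xw) gx_gt0 gw_lt0.
  + by apply: sgz_const_off_sub sg_const; rewrite ?negb_and -?ltNge; lra.
  + by apply: sgz_locally_const_sub sg_loc; lra.
  by exists r => //; apply/andP; split; lra.
Qed.
End IntermediateValue.

Section Radicals.
Variables (F : rcfType) (D : F -> Prop).

(* [radical_fun qs f]: on [D], [f] is an element of F[x][sqrt q_1]...[sqrt q_m],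
   where [qs = [:: q_1; ...; q_m]]. *)
Fixpoint radical_fun (qs : seq {poly F}) (f : F -> F) : Prop :=
  match qs with
  | [::] => exists p : {poly F}, forall x, D x -> f x = p.[x]
  | q :: qs' => exists g h, [/\ radical_fun qs' g, radical_fun qs' h &
      forall x, D x -> f x = g x + h x * Num.sqrt q.[x]]
  end.

Definition radicands_ge0 (qs : seq {poly F}) :=
  forall q x, q \in qs -> D x -> 0 <= q.[x].

Lemma radicands_ge0_behead q qs : radicands_ge0 (q :: qs) -> radicands_ge0 qs.
Proof. by move=> qs_ge0 q' x q'_qs; apply: qs_ge0; rewrite inE q'_qs orbT. Qed.

Lemma radical_fun_eq qs f g :
  (forall x, D x -> f x = g x) -> radical_fun qs f -> radical_fun qs g.
Proof.
case: qs => [|q qs] /= fg.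
  by case=> p fp; exists p => x Dx; rewrite -fg ?fp.
by case=> g1 [h1 [g1R h1R fE]]; exists g1, h1; split=> // x Dx; rewrite -fg ?fE.
Qed.

Lemma radical_fun_poly qs p : radical_fun qs (fun x => p.[x]).
Proof.
elim: qs p => [|q qs IH] p /=; first by exists p.
exists (fun x => p.[x]), (fun x => 0%:P.[x]); split=> // x _.
by rewrite horner0 mul0r addr0.
Qed.

Lemma radical_fun_add qs f g :
  radical_fun qs f -> radical_fun qs g -> radical_fun qs (fun x => f x + g x).
Proof.
elim: qs f g => [|q qs IH] f g /=.
  by case=> p fp [p' gp']; exists (p + p') => x Dx; rewrite hornerD fp ?gp'.
case=> [f1 [f2 [f1R f2R fE]]] [g1 [g2 [g1R g2R gE]]].
exists (fun x => f1 x + g1 x), (fun x => f2 x + g2 x); split; try exact: IH.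
by move=> x Dx; rewrite fE // gE //; ring.
Qed.

Lemma radical_fun_mul qs f g : radicands_ge0 qs ->
  radical_fun qs f -> radical_fun qs g -> radical_fun qs (fun x => f x * g x).
Proof.
elim: qs f g => [|q qs IH] f g /= qs_ge0.
  by case=> p fp [p' gp']; exists (p * p') => x Dx; rewrite hornerM fp ?gp'.
have qs'_ge0 := radicands_ge0_behead qs_ge0.
case=> [f1 [f2 [f1R f2R fE]]] [g1 [g2 [g1R g2R gE]]].
exists (fun x => f1 x * g1 x + f2 x * g2 x * q.[x]),
       (fun x => f1 x * g2 x + f2 x * g1 x).
split.
- apply: radical_fun_add; first exact: (IH).
  by apply: (IH) => //; [exact: (IH) | exact: radical_fun_poly].
- by apply: radical_fun_add; exact: IH.
move=> x Dx; rewrite fE // gE //.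
have := sqr_sqrtr (qs_ge0 q x (mem_head _ _) Dx); set s := Num.sqrt _ => <-.
ring.
Qed.

Lemma radical_fun_sqrt qs q : q \in qs -> radical_fun qs (fun x => Num.sqrt q.[x]).
Proof.
elim: qs => [|q' qs IH] //=; rewrite inE => /predU1P[<-|q_qs].
  exists (fun x => 0%:P.[x]), (fun x => 1%:P.[x]).
  by split; try exact: radical_fun_poly; move=> x _; rewrite !hornerC add0r mul1r.
exists (fun x => Num.sqrt q.[x]), (fun x => 0%:P.[x]).
by split; [exact: IH | exact: radical_fun_poly | move=> x _; rewrite horner0 mul0r addr0].
Qed.

Lemma radical_fun_sum qs (I : Type) (r : seq I) (f : I -> F -> F) :
  (forall i, radical_fun qs (f i)) -> radical_fun qs (fun x => \sum_(i <- r) f i x).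
Proof.
move=> fR; elim: r => [|i r IH].
  by apply: (radical_fun_eq _ (radical_fun_poly _ 0)) => x _; rewrite big_nil horner0.
by apply: (radical_fun_eq _ (radical_fun_add (fR i) IH)) => x _; rewrite big_cons.
Qed.

Definition finite_sign_changes (f : F -> F) := exists S : seq F,
  forall z w, D z -> D w -> z <= w -> ~~ has (fun y => z <= y <= w) S ->
  sgz (f z) = sgz (f w).

Lemma finite_sign_changes_poly p : finite_sign_changes (fun x => p.[x]).
Proof.
have [->|p_neq0] := eqVneq p 0; first by exists [::] => *; rewrite !horner0.
exists (rootsR p) => z w _ _ zw /hasPn S_zw.
have p_zw : {in `[z, w], forall x, ~~ root p x}.
  move=> x x_zw; apply/negP => px.
  have /S_zw : x \in rootsR p by rewrite -(roots_on_rootsR p_neq0) px andbT.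
  by rewrite in_itv /= in x_zw; rewrite x_zw.
have z_zw : z \in `[z, w] by rewrite in_itv /= lexx zw.
have w_zw : w \in `[z, w] by rewrite in_itv /= lexx zw.
by rewrite -sgz_sgr (polyrN0_itv p_zw w_zw z_zw) sgz_sgr.
Qed.

Lemma finite_sign_changes_radical qs f : radicands_ge0 qs ->
  radical_fun qs f -> finite_sign_changes f.
Proof.
elim: qs f => [|q qs IH] f /= qs_ge0.
  case=> p fp; have [S SP] := finite_sign_changes_poly p.
  by exists S => z w Dz Dw zw S_zw; rewrite !fp // (SP z w).
have qs'_ge0 := radicands_ge0_behead qs_ge0.
case=> g [h [gR hR fE]].
have NR : radical_fun qs (fun x => g x ^+ 2 - h x ^+ 2 * q.[x]).
  apply: (radical_fun_eq (f := fun x => g x * g x + (-1)%:P.[x] * (h x * h x * q.[x]))).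
    by move=> x _; rewrite hornerC; ring.
  apply: radical_fun_add; first exact: radical_fun_mul.
  apply: radical_fun_mul => //; first exact: radical_fun_poly.
  apply: radical_fun_mul => //; last exact: radical_fun_poly.
  exact: radical_fun_mul.
have [Sg SgP] := IH g qs'_ge0 gR; have [Sh ShP] := IH h qs'_ge0 hR.
have [SN SNP] := IH _ qs'_ge0 NR.
exists (Sg ++ Sh ++ SN) => z w Dz Dw zw.
rewrite !has_cat !negb_or => /and3P[Sg_zw Sh_zw SN_zw].
rewrite !fE // !sgz_add_mul_sqrt ?(qs_ge0 q _ (mem_head _ _)) //.
by rewrite (SgP z w) // (ShP z w) // (SNP z w).
Qed.
End Radicals.

Section SqrtBounds.
Variable F : rcfType.

Lemma ler_dist_sqrt (a b : F) : 0 <= a -> 0 <= b ->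
  `|Num.sqrt a - Num.sqrt b| <= Num.sqrt `|a - b|.
Proof.
move=> a_ge0 b_ge0; rewrite -[leLHS]sqrtr_sqr; apply: ler_wsqrtr.
have := sqr_sqrtr a_ge0; have := sqr_sqrtr b_ge0.
have := sqrtr_ge0 a; have := sqrtr_ge0 b.
move: (Num.sqrt a) (Num.sqrt b) => sa sb sb_ge0 sa_ge0 <- <-.
by have [sab|sba] := leP sa sb; [rewrite ler0_norm | rewrite ger0_norm]; nra.
Qed.

Lemma sgz_locally_const_holder (g : F -> F) (P : F -> Prop) (K p : F) :
  0 <= K -> g p != 0 ->
  (forall x, P x -> `|g x - g p| <= `|x - p| + K * Num.sqrt `|x - p|) ->
  exists2 d, 0 < d & forall x, P x -> `|x - p| < d -> sgz (g x) = sgz (g p).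
Proof.
move=> K_ge0 gp_neq0 g_holder; set c := `|g p|.
have c_gt0 : 0 < c by rewrite normr_gt0.
pose e := Num.min 1 (c / (1 + K)).
have e_gt0 : 0 < e by rewrite lt_min ltr01 divr_gt0 //; lra.
exists (e ^+ 2) => [|x Px xp]; first exact: exprn_gt0.
apply: sgz_near; apply: le_lt_trans (g_holder x Px) _.
have := normr_ge0 (x - p); move: (`|x - p|) xp => t te t_ge0.
have st_lt_e : Num.sqrt t < e.
  by rewrite -(gtr0_norm e_gt0) -sqrtr_sqr ltr_sqrt ?exprn_gt0.
move: st_lt_e; rewrite lt_min => /andP[st_lt1 st_ltc].
have := sqr_sqrtr t_ge0; have := sqrtr_ge0 t; move: (Num.sqrt t) st_lt1 st_ltc => s s_lt1.
rewrite ltr_pdivlMr; last lra.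
move=> s_c s_ge0 <-; rewrite -/c; nra.
Qed.
End SqrtBounds.

Section Fsig.
Variables (F : rcfType) (n : nat) (omega k : 'I_n -> F).

Definition fsig_dom (x : F) := forall i, 0 <= k i ^+ 2 * x - omega i ^+ 2.

Lemma fsig_dom_ge x y : fsig_dom x -> x <= y -> fsig_dom y.
Proof.
move=> x_dom xy i; apply: le_trans (x_dom i) _.
by rewrite lerD2r ler_wpM2l ?sqr_ge0.
Qed.

Lemma fsig_flip sigma mu R : sigma mu = true ->
  fsig omega k sigma R = fsig omega k (flip_to_minus sigma mu) R
    + 2 * n%:R^-1 * Num.sqrt (k mu ^+ 2 * R - omega mu ^+ 2).
Proof.
move=> sigma_mu; rewrite /fsig (bigD1 mu) // [in RHS](bigD1 mu) //=.
rewrite /flip_to_minus eqxx sigma_mu /sgn.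
under [in RHS]eq_bigr => i /negbTE -> do [].
ring.
Qed.

Definition radicand (i : 'I_n) : {poly F} := (k i ^+ 2)%:P * 'X - (omega i ^+ 2)%:P.

Definition radicands := [seq radicand i | i <- enum 'I_n].

Lemma radicandE i x : (radicand i).[x] = k i ^+ 2 * x - omega i ^+ 2.
Proof. by rewrite hornerD hornerN hornerMX !hornerC. Qed.

Lemma radicands_ge0_fsig_dom : radicands_ge0 fsig_dom radicands.
Proof. by move=> q x /mapP[i _ ->] x_dom; rewrite radicandE. Qed.

Lemma radical_fun_fsig sigma : radical_fun fsig_dom radicands (fsig omega k sigma).
Proof.
have radicands_ge0 := radicands_ge0_fsig_dom.
apply: (radical_fun_eq (f := fun x => (- 'X).[x] + (n%:R^-1)%:P.[x] *
    \sum_(i < n) (sgn F (sigma i))%:P.[x] * Num.sqrt (radicand i).[x])).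
  move=> x _; rewrite /fsig hornerN hornerX hornerC.
  by under eq_bigr do rewrite hornerC radicandE.
apply: radical_fun_add; first exact: radical_fun_poly.
apply: radical_fun_mul => //; first exact: radical_fun_poly.
apply: radical_fun_sum => i; apply: radical_fun_mul => //; first exact: radical_fun_poly.
by apply: radical_fun_sqrt; apply: map_f; rewrite mem_enum.
Qed.

Definition kmean := n%:R^-1 * \sum_(i < n) k i.

Hypothesis k_ge0 : forall i, 0 <= k i.

Lemma kmean_ge0 : 0 <= kmean.
Proof. by rewrite mulr_ge0 ?invr_ge0 ?ler0n ?sumr_ge0. Qed.

Lemma fsig_le sigma x : 0 <= x -> fsig omega k sigma x <= - x + kmean * Num.sqrt x.
Proof.
move=> x_ge0; rewrite /fsig /kmean -mulrA lerD2l ler_wpM2l ?invr_ge0 ?ler0n //.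
rewrite mulr_suml; apply: ler_sum => i _.
have -> : k i * Num.sqrt x = Num.sqrt (k i ^+ 2 * x).
  by rewrite sqrtrM ?sqr_ge0 // sqrtr_sqr ger0_norm.
apply: (@le_trans _ _ (Num.sqrt (k i ^+ 2 * x - omega i ^+ 2))).
  have := sqrtr_ge0 (k i ^+ 2 * x - omega i ^+ 2).
  by rewrite /sgn; case: (sigma i); rewrite ?mul1r ?mulN1r; lra.
by apply: ler_wsqrtr; rewrite gerBl sqr_ge0.
Qed.

Lemma fsig_lt0 sigma x : kmean ^+ 2 < x -> fsig omega k sigma x < 0.
Proof.
move=> kx; have x_gt0 : 0 < x by apply: le_lt_trans kx; exact: sqr_ge0.
apply: le_lt_trans (fsig_le sigma (ltW x_gt0)) _.
have kmean_lt : kmean < Num.sqrt x.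
  by rewrite -(ger0_norm kmean_ge0) -sqrtr_sqr ltr_sqrt.
have := sqr_sqrtr (ltW x_gt0); have := sqrtr_ge0 x.
move: (Num.sqrt x) kmean_lt => s ks s_ge0 <-; have := kmean_ge0; nra.
Qed.

Lemma fsig_holder sigma x p : fsig_dom x -> fsig_dom p ->
  `|fsig omega k sigma x - fsig omega k sigma p| <= `|x - p| + kmean * Num.sqrt `|x - p|.
Proof.
move=> x_dom p_dom.
have -> : fsig omega k sigma x - fsig omega k sigma p = - (x - p) + n%:R^-1 *
    \sum_(i < n) sgn F (sigma i) * (Num.sqrt (k i ^+ 2 * x - omega i ^+ 2)
                                   - Num.sqrt (k i ^+ 2 * p - omega i ^+ 2)).
  by rewrite /fsig; under [in RHS]eq_bigr => i _ do rewrite mulrBr; rewrite sumrB; ring.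
apply: le_trans (ler_normD _ _) _; rewrite normrN lerD2l normrM -mulrA /kmean.
rewrite ger0_norm ?invr_ge0 ?ler0n // ler_wpM2l ?invr_ge0 ?ler0n //.
apply: le_trans (ler_norm_sum _ _ _) _; rewrite mulr_suml; apply: ler_sum => i _.
have sgn_norm : `|sgn F (sigma i)| = 1.
  by rewrite /sgn; case: (sigma i); rewrite ?normrN normr1.
rewrite normrM sgn_norm mul1r; apply: le_trans (ler_dist_sqrt (x_dom i) (p_dom i)) _.
rewrite opprB addrA subrK -mulrBr normrM sqrtrM ?normr_ge0 //.
by rewrite (ger0_norm (sqr_ge0 (k i))) sqrtr_sqr (ger0_norm (k_ge0 i)).
Qed.
End Fsig.

Theorem lemma2 (F : rcfType) (n : nat) (omega k : 'I_n -> F)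
  (hn : (2 <= n)%N)
  (hk : forall mu, 0 < k mu)
  (IC1 : \sum_(mu < n) omega mu = 0)
  (IC2 : exists mu, omega mu != 0)
  (IC3 : forall mu nu : 'I_n, (mu <= nu)%N ->
           `|omega mu / k mu| <= `|omega nu / k nu|)
  (sigma : 'I_n -> bool) (mu : 'I_n) (hmu : sigma mu = true) :
  (~ exists R, pos_root omega k sigma R) ->
  ~ exists R, pos_root omega k (flip_to_minus sigma mu) R.
Proof.
move=> no_root [R1 [R1_gt0 [R1_dom fR1]]]; apply: no_root.
have k_ge0 i : 0 <= k i := ltW (hk i).
set f := fsig omega k sigma.
have dom x : R1 <= x -> fsig_dom omega k x := fsig_dom_ge R1_dom.
have fR1_ge0 : 0 <= f R1.
  rewrite /f (fsig_flip _ _ _ hmu) fR1 add0r.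
  by rewrite !mulr_ge0 ?invr_ge0 ?ler0n ?sqrtr_ge0.
pose B := R1 + kmean k ^+ 2.
have R1B : R1 <= B by rewrite lerDl sqr_ge0.
have fB_lt0 : f B < 0 by apply: fsig_lt0 => //; rewrite /B; lra.
have [fR1_0|fR1_gt0] : f R1 = 0 \/ 0 < f R1.
  by move: fR1_ge0; rewrite le_eqVlt => /orP[/eqP|]; [left|right].
  by exists R1.
have [S S_const] := finite_sign_changes_radical
  (@radicands_ge0_fsig_dom _ _ omega k) (radical_fun_fsig omega k sigma).
have [||x /andP[R1x xB] fx] := @ivt_sgz_const_off _ f S R1 B _ _ R1B fR1_gt0 fB_lt0.
- move=> a b R1a ab bB; apply: S_const => //; apply: dom => //; exact: le_trans R1a ab.
- move=> p /andP[R1p pB] fp; apply: sgz_locally_const_holder (kmean_ge0 k_ge0) fp _.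
  by move=> y /andP[R1y _]; apply: fsig_holder => //; apply: dom.
by exists x; split; [lra | split; [exact: dom |]].
Qed.
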